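(* Let $L$ be a finite extension of the semifield $\mathbb{B}$. Then $L=\mathbb{B}$ (the embedding $\mathbb{B}\to L$ is surjective).
   Context: $\mathbb{B}=\{0,1\}$ is the semifield with $x+0=0+x=x$, $1+1=1$, and the obvious multiplication. A semifield is a commutative semiring in which every nonzero element is a unit. An extension of a semifield $K$ is a semifield $L$ with an injective homomorphism $K\to L$; it is finite if $L$ is a finitely generated $K$-semimodule. *)

From HB Require Import structures.
From mathcomp Require Import all_boot all_algebra.
Set Implicit Arguments. Unset Strict Implicit. Unset Printing Implicit Defensive.
Import GRing.Theory.
Local Open Scope ring_scope.

(* The Boolean semifield B = {0,1}: addition is "or" (so 1 + 1 = 1),
   multiplication is "and". We use a fresh alias of bool to avoid
   clashing with any other algebraic structure on bool. *)
Definition Bsf : Type := bool.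
HB.instance Definition _ := Choice.on Bsf.

Lemma Bsf_addA : associative (orb : Bsf -> Bsf -> Bsf). Proof. exact: orbA. Qed.
Lemma Bsf_addC : commutative (orb : Bsf -> Bsf -> Bsf). Proof. exact: orbC. Qed.
Lemma Bsf_add0 : left_id (false : Bsf) orb. Proof. by []. Qed.
HB.instance Definition _ := GRing.isNmodule.Build Bsf Bsf_addA Bsf_addC Bsf_add0.

Lemma Bsf_mulA : associative (andb : Bsf -> Bsf -> Bsf). Proof. exact: andbA. Qed.
Lemma Bsf_mulC : commutative (andb : Bsf -> Bsf -> Bsf). Proof. exact: andbC. Qed.
Lemma Bsf_mul1 : left_id (true : Bsf) andb. Proof. by []. Qed.
Lemma Bsf_mulDl : left_distributive (andb : Bsf -> Bsf -> Bsf) (+%R : Bsf -> Bsf -> Bsf).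
Proof. by case; case; case. Qed.
Lemma Bsf_mul0 : left_zero (0 : Bsf) andb. Proof. by []. Qed.
Lemma Bsf_one_neq0 : (true : Bsf) != 0. Proof. by []. Qed.
HB.instance Definition _ := GRing.Nmodule_isComNzSemiRing.Build Bsf
  Bsf_mulA Bsf_mulC Bsf_mul1 Bsf_mulDl Bsf_mul0 Bsf_one_neq0.

Definition semifield (L : comPzSemiRingType) : Prop :=
  forall x : L, x != 0 -> exists y : L, x * y = 1.

(* L is a finitely generated K-semimodule, the K-action being given by
   the homomorphism f : K -> L (k . x := f k * x). *)
Definition finite_ext (K L : comPzSemiRingType) (f : {rmorphism K -> L}) : Prop :=
  exists (n : nat) (v : 'I_n -> L),
    forall x : L, exists c : 'I_n -> K, x = \sum_(i < n) f (c i) * v i.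

Lemma Bsf_semifield : semifield Bsf.
Proof. by case=> // _; exists true. Qed.
Lemma Bsf_1p1 : (1 + 1 : Bsf) = 1. Proof. by []. Qed.

From HB Require Import structures.
From mathcomp Require Import all_boot all_algebra.
Set Implicit Arguments. Unset Strict Implicit. Unset Printing Implicit Defensive.
Import GRing.Theory.
Local Open Scope ring_scope.

(* Since B -> L is injective, 1 + 1 = 1 and 1 <> 0 in L, so addition in L is
   idempotent and L has no nontrivial zero sums.  Finite generation over the
   finite semiring B makes L finite, hence every nonzero y is a root of unity,
   y^(m+1) = 1.  The geometric sum S = 1 + y + ... + y^m then satisfies
   S y = S, and S <> 0 because it contains the summand 1; cancelling the unit S
   gives y = 1.  So L = {0, 1}. *)

Section IdempotentSemiRing.
Variable R : pzSemiRingType.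
Hypothesis oneD1 : 1 + 1 = 1 :> R.

Lemma addrr_idem (a : R) : a + a = a.
Proof. by rewrite -{1 2}[a]mulr1 -mulrDr oneD1 mulr1. Qed.

Lemma addr_eq0l (a b : R) : a + b = 0 -> a = 0.
Proof. by move=> ab0; rewrite -[a]addr0 -ab0 addrA addrr_idem. Qed.

End IdempotentSemiRing.

Lemma sum_expr_mulr_root1 (R : pzSemiRingType) (y : R) (m : nat) :
  y ^+ m.+1 = 1 -> (\sum_(k < m.+1) y ^+ k) * y = \sum_(k < m.+1) y ^+ k.
Proof.
move=> ym; rewrite mulr_suml big_ord_recr /= -exprSr ym big_ord_recl expr0 addrC.
by congr (1 + _); apply: eq_bigr => k _; rewrite -exprSr.
Qed.

Lemma expr_eventually_periodic (R : pzSemiRingType) (s : seq R) (y : R) :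
  (forall x : R, x \in s) -> exists i m, y ^+ i = y ^+ (i + m.+1).
Proof.
move=> Rs; pose pows := [seq y ^+ k | k <- iota 0 (size s).+1].
have /(uniqPn 0)[i [j [lt_ij lt_j eq_ij]]] : ~~ uniq pows.
  apply/negP => /uniq_leq_size /(_ (fun x _ => Rs x)).
  by rewrite size_map size_iota ltnn.
rewrite size_map size_iota in lt_j.
rewrite !(nth_map 0) ?size_iota ?(ltn_trans lt_ij) // !nth_iota
  ?(ltn_trans lt_ij) // !add0n in eq_ij.
by exists i, (j - i.+1)%N; rewrite addnS -addSn subnKC.
Qed.

Lemma unit_root_of_unity (R : comPzSemiRingType) (s : seq R) (y z : R) :
  (forall x : R, x \in s) -> y * z = 1 -> exists m, y ^+ m.+1 = 1.
Proof.
move=> Rs yz; have [i [m yi]] := expr_eventually_periodic y Rs; exists m.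
have yzi : y ^+ i * z ^+ i = 1 by rewrite -exprMn yz expr1n.
by rewrite -[LHS]mul1r -yzi mulrAC -exprD -yi yzi.
Qed.

Lemma root_of_unity_eq1 (L : comPzSemiRingType) (y : L) (m : nat) :
  semifield L -> 1 + 1 = 1 :> L -> 1 != 0 :> L -> y ^+ m.+1 = 1 -> y = 1.
Proof.
move=> sfL oneD1 oneN0 ym; pose S := \sum_(k < m.+1) y ^+ k.
have SN0 : S != 0.
  by apply: contraNneq oneN0; rewrite /S big_ord_recl expr0 => /addr_eq0l->.
have [t St] := sfL S SN0.
by rewrite -[y]mul1r -St mulrAC sum_expr_mulr_root1.
Qed.

Lemma finite_ext_enum (K L : comPzSemiRingType) (f : {rmorphism K -> L})
    (ks : seq K) :
  (forall k : K, k \in ks) -> finite_ext f -> exists s : seq L, forall x : L, x \in s.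
Proof.
move=> Kks [n [v gen_v]].
exists (codom (fun c : {ffun 'I_n -> 'I_(size ks)} =>
  \sum_(i < n) f (nth 0 ks (c i)) * v i)) => x.
have [c ->] := gen_v x; apply/codomP.
exists [ffun i => Ordinal (etrans (index_mem (c i) ks) (Kks (c i)))].
by apply: eq_bigr => i _; rewrite ffunE nth_index.
Qed.

Theorem mainTheorem10 (L : comPzSemiRingType) (f : {rmorphism Bsf -> L}) :
  semifield L -> injective f -> finite_ext f ->
  forall y : L, exists b : Bsf, f b = y.
Proof.
move=> sfL inj_f fin_f y.
have oneD1 : 1 + 1 = 1 :> L by rewrite -(rmorph1 f) -rmorphD.
have oneN0 : 1 != 0 :> L.
  apply/eqP => e; suff : (true : Bsf) = false by [].
  by apply: inj_f; rewrite rmorph1 rmorph0.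
have [->|yN0] := eqVneq y 0; first by exists false; rewrite rmorph0.
have enum_Bsf : forall b : Bsf, b \in [:: false; true] by case.
have [s Ls] := finite_ext_enum enum_Bsf fin_f.
have [z yz] := sfL y yN0.
have [m ym] := unit_root_of_unity Ls yz.
by exists true; rewrite rmorph1 (root_of_unity_eq1 sfL oneD1 oneN0 ym).
Qed.
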